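(* Let $W\in\mathbb{D}_n$ be a Dale matrix with excitatory neurons $\mathcal{E}$ and inhibitory neurons $\mathcal{I}$. Let $m=|\mathcal{E}|+1$, identify the first $m-1$ indices of $[m]$ with $\mathcal{E}$ and let index $m$ be a single inhibitory neuron. Let $W'\in\mathbb{D}_m$ be any Dale matrix (with excitatory set $\mathcal{E}$ and inhibitory set $\{m\}$) such that $W'_{\mathcal{E}}=W_{\mathcal{E}}$ (the principal submatrices on $\mathcal{E}$ agree) and, for all $i\in\mathcal{E}$, $$W'_{im}=\begin{cases}-1,&\text{if there is } j\in\mathcal{I}\text{ with } W_{ij}\neq 0,\\ 0,&\text{if } W_{ij}=0 \text{ for all } j\in\mathcal{I}.\end{cases}$$ Assume both $W$ and $W'$ satisfy the Ground Assumption. Then $\mathcal{C}(W)=\mathcal{C}(W')$.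
   Context: Threshold-linear network: for $W\in\mathbb{R}^{n\times n}$ and $b\in\mathbb{R}^n$, the dynamics are $\dot x_i=-x_i+[\sum_{j=1}^n W_{ij}x_j+b_i]_+$, $i=1,\dots,n$, where $[y]_+=\max(0,y)$. A fixed point is $x^*\in\mathbb{R}^n$ with $x^*=[Wx^*+b]_+$ (componentwise). A Dale matrix $W\in\mathbb{D}_n$ is an $n\times n$ real matrix together with a partition $[n]=\mathcal{E}\sqcup\mathcal{I}$ into excitatory and inhibitory neurons such that $W_{ii}=0$ for all $i$, $W_{ji}\ge 0$ for all $j$ whenever $i\in\mathcal{E}$, and $W_{ji}\le 0$ for all $j$ whenever $i\in\mathcal{I}$. Ground Assumption: for every nonempty $\sigma\subset[n]$ the principal submatrix $(I-W)_\sigma$ is nonsingular. For $x\in\mathbb{R}^n_{\ge0}$, its excitatory support is $\mathrm{supp}_+x=\{i\in\mathcal{E}: x_i>0\}$. The combinatorial code of $W$ is $\mathcal{C}(W)=\{\mathrm{supp}_+x^*\;:\; b\in\mathbb{R}^n_{\ge0},\ x^*\in\mathbb{R}^n_{\ge 0}\text{ a fixed point of the network }(W,b)\}$. For $\sigma\subset[n]$, $A_\sigma$ denotes the principal submatrix of $A$ on rows and columns $\sigma$. *)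

From HB Require Import structures.
From mathcomp Require Import all_boot all_order all_algebra.
From mathcomp Require Import reals.
Set Implicit Arguments. Unset Strict Implicit. Unset Printing Implicit Defensive.
Import Order.TTheory GRing.Theory Num.Theory.
Local Open Scope ring_scope.

Section Defs.
Variable R : realType.

Definition dale (n : nat) (W : 'M[R]_n) (E : {set 'I_n}) : Prop :=
  [/\ forall i, W i i = 0,
      forall i j, i \in E -> 0 <= W j i
    & forall i j, i \notin E -> W j i <= 0].

Definition principal_submx (n : nat) (A : 'M[R]_n) (sigma : {set 'I_n})
  : 'M[R]_#|sigma| :=
  \matrix_(i < #|sigma|, j < #|sigma|)
     A (@enum_val _ (mem sigma) i) (@enum_val _ (mem sigma) j).

Definition ground_assumption (n : nat) (W : 'M[R]_n) : Prop :=
  forall sigma : {set 'I_n}, sigma != set0 ->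
    principal_submx (1%:M - W) sigma \in unitmx.

Definition relu (y : R) : R := Num.max 0 y.

Definition tln_fixed_point (n : nat) (W : 'M[R]_n) (b x : 'cV[R]_n) : Prop :=
  forall i, x i 0 = relu ((W *m x) i 0 + b i 0).

Definition supp_plus (n : nat) (E : {set 'I_n}) (x : 'cV[R]_n) : {set 'I_n} :=
  [set i in E | 0 < x i 0].

Definition in_code (n : nat) (W : 'M[R]_n) (E : {set 'I_n}) (S : {set 'I_n})
  : Prop :=
  exists b x : 'cV[R]_n,
    (forall i, 0 <= b i 0) /\ (forall i, 0 <= x i 0) /\
    tln_fixed_point W b x /\ S = supp_plus E x.

End Defs.

From HB Require Import structures.
From mathcomp Require Import all_boot all_order all_algebra.
From mathcomp Require Import reals.
From mathcomp Require Import ring lra.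
Import Order.TTheory GRing.Theory Num.Theory.
Set Implicit Arguments. Unset Strict Implicit. Unset Printing Implicit Defensive.
Local Open Scope ring_scope.

(* Since the input b ranges over all nonnegative vectors, a set
   belongs to the code C(W) exactly when it is the excitatory support of a
   nonnegative "supersolution" x >= 0 with W x <= x (take b := x - W x).
   For a Dale matrix the inhibitory coordinates of such an x can be chosen
   freely: raising all inhibitory activities by a large common amount M
   restores W x <= x at every neuron receiving some inhibition, and does not
   affect the others.  Hence C(W) only depends on the excitatory block W_E and
   on WHICH excitatory neurons receive inhibition (the "reduced code" below):
   S is in the code iff some y >= 0 supported exactly on S satisfies
   (W_E y)_i <= y_i at every excitatory i without inhibitory input.
   The matrix W' of the theorem has the same excitatory block and the same
   inhibited excitatory neurons, so both codes equal the same reduced code. *)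

Section Supersolutions.
Variables (R : realType) (n : nat).
Implicit Types (W : 'M[R]_n) (E : {set 'I_n}) (x : 'cV[R]_n).

Definition supersolution W x : Prop :=
  forall i, 0 <= x i 0 /\ (W *m x) i 0 <= x i 0.

Lemma in_code_supersolution W E T :
  in_code W E T <-> exists x, supersolution W x /\ T = supp_plus E x.
Proof.
split=> [[b [x [b_ge0 [x_ge0 [fixed ->]]]]] | [x [super ->]]].
  exists x; split=> // i; split=> //.
  by rewrite fixed /relu le_max lerDl b_ge0 orbT.
have input_entry i : (x - W *m x) i 0 = x i 0 - (W *m x) i 0 by rewrite !mxE.
exists (x - W *m x), x; split; last split; last split => //.
- by move=> i; rewrite input_entry subr_ge0; case: (super i).
- by move=> i; case: (super i).
- move=> i; rewrite input_entry addrC subrK /relu.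
  by apply/esym/max_idPr; case: (super i).
Qed.

Definition no_inhibitory_input W E (a : 'I_n) : Prop :=
  forall j, j \notin E -> W a j = 0.

Definition inhibitory_indicator E : 'cV[R]_n := \col_j (j \notin E)%:R.

Lemma inhibitory_drive W E a :
  (W *m inhibitory_indicator E) a 0 = \sum_(j | j \notin E) W a j.
Proof.
rewrite mxE [RHS]big_mkcond /=; apply: eq_bigr => j _; rewrite mxE.
by case: (j \notin E); rewrite ?mulr1 ?mulr0.
Qed.

Section Inhibitory.
Variables (W : 'M[R]_n) (E : {set 'I_n}).
Hypothesis inhibitory_le0 : forall i j, i \notin E -> W j i <= 0.

Lemma inhibitory_drive_le0 a : (W *m inhibitory_indicator E) a 0 <= 0.
Proof. by rewrite inhibitory_drive; apply: sumr_le0 => j; apply: inhibitory_le0. Qed.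

(* Total inhibitory weight zero means no inhibitory input at all, since all
   inhibitory weights have the same sign. *)
Lemma inhibitory_drive_eq0 a :
  (W *m inhibitory_indicator E) a 0 = 0 -> no_inhibitory_input W E a.
Proof.
rewrite inhibitory_drive => sum0 j jI; apply/eqP; rewrite -oppr_eq0.
apply/eqP/(@psumr_eq0P _ _ (fun j => j \notin E) (fun j => - W a j)) => //.
- by move=> i iI; rewrite oppr_ge0 inhibitory_le0.
- by rewrite sumrN sum0 oppr0.
Qed.

End Inhibitory.
End Supersolutions.

Lemma uniform_domination (R : realFieldType) (I : finType) (g d : I -> R) :
  (forall j, 0 <= d j) -> (forall j, d j = 0 -> 0 <= g j) ->
  exists2 M, 0 <= M & forall j, 0 <= g j + M * d j.
Proof.
move=> d_ge0 g_ge0; exists (\sum_j `|g j| / d j).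
  by apply: sumr_ge0 => j _; apply: divr_ge0.
move=> j; have [dj0 | djn0] := eqVneq (d j) 0; first by rewrite dj0 mulr0 addr0 g_ge0.
have dj_gt0 : 0 < d j by rewrite lt_def djn0 d_ge0.
have : `|g j| / d j <= \sum_i `|g i| / d i.
  rewrite (bigD1 j) //= lerDl; apply: sumr_ge0 => i _; exact: divr_ge0.
rewrite ler_pdivrMr // => bound.
have : - g j <= `|g j| by rewrite -normrN ler_norm.
lra.
Qed.

Section AddInhibition.
Variables (R : realType) (n : nat) (W : 'M[R]_n) (E : {set 'I_n}).
Hypothesis inhibitory_le0 : forall i j, i \notin E -> W j i <= 0.

Lemma add_inhibition (x0 : 'cV[R]_n) :
  (forall j, 0 <= x0 j 0) -> (forall j, j \notin E -> x0 j 0 = 0) ->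
  (forall a, a \in E -> no_inhibitory_input W E a -> (W *m x0) a 0 <= x0 a 0) ->
  exists x, supersolution W x /\ forall a, a \in E -> x a 0 = x0 a 0.
Proof.
move=> x0_ge0 x0_inh x0_quiet.
pose e := inhibitory_indicator R E.
have e_ge0 j : 0 <= e j 0 by rewrite mxE ler0n.
(* with x := x0 + M e, the slack x - W x equals (x0 - W x0) + M d *)
pose d j := e j 0 - (W *m e) j 0.
have d_ge0 j : 0 <= d j.
  by rewrite /d subr_ge0 (le_trans (inhibitory_drive_le0 inhibitory_le0 j)).
have d0_quiet j : d j = 0 -> j \in E /\ no_inhibitory_input W E j.
  move=> dj0; have drive := inhibitory_drive_le0 inhibitory_le0 j.
  have ej0 : e j 0 = 0 by have := e_ge0 j; rewrite /d in dj0; lra.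
  have drive0 : (W *m e) j 0 = 0 by rewrite /d ej0 in dj0; lra.
  split; last exact: inhibitory_drive_eq0 inhibitory_le0 _ drive0.
  by move: ej0; rewrite mxE; case: (j \in E) => //= /eqP; rewrite oner_eq0.
have [M M_ge0 dominated] :
    exists2 M, 0 <= M & forall j, 0 <= (x0 j 0 - (W *m x0) j 0) + M * d j.
  apply: uniform_domination => // j /d0_quiet [jE quiet].
  by rewrite subr_ge0 x0_quiet.
have x_entry j : (x0 + M *: e) j 0 = x0 j 0 + M * e j 0 by rewrite !mxE.
have Wx_entry j : (W *m (x0 + M *: e)) j 0 = (W *m x0) j 0 + M * (W *m e) j 0.
  by rewrite mulmxDr -scalemxAr [LHS]mxE [X in _ + X]mxE.
exists (x0 + M *: e); split=> [j | a aE].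
  rewrite x_entry Wx_entry; split; first by apply: addr_ge0 => //; apply: mulr_ge0.
  by have := dominated j; rewrite /d; lra.
by rewrite x_entry mxE aE mulr0 addr0.
Qed.

End AddInhibition.

Section Restriction.
Variables (R : realType) (n k : nat) (f : 'I_k -> 'I_n).
Hypothesis f_inj : injective f.

Lemma mulmx_on_image (W : 'M[R]_n) (x : 'cV[R]_n) a :
  (forall j, j \notin f @: [set: 'I_k] -> W a j * x j 0 = 0) ->
  (W *m x) a 0 = \sum_l W a (f l) * x (f l) 0.
Proof.
move=> outside0; rewrite mxE (bigID (mem (f @: [set: 'I_k]))) /=.
rewrite [X in _ + X]big1 ?addr0; last by move=> j /outside0.
rewrite big_imset /=; last by move=> u v _ _; apply: f_inj.
by apply: eq_bigl => l; rewrite inE.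
Qed.

Definition extend_by_zero (y : 'I_k -> R) : 'cV[R]_n :=
  \col_j \sum_l (f l == j)%:R * y l.

Lemma extend_by_zero_image y i : extend_by_zero y (f i) 0 = y i.
Proof.
rewrite mxE (bigD1 i) //= eqxx mul1r big1 ?addr0 // => l /negbTE li.
by rewrite (inj_eq f_inj) li mul0r.
Qed.

Lemma extend_by_zero_outside y j :
  j \notin f @: [set: 'I_k] -> extend_by_zero y j 0 = 0.
Proof.
move=> jout; rewrite mxE big1 // => l _; case: eqP => [fl_j | _]; last by rewrite mul0r.
by move: jout; rewrite -fl_j imset_f.
Qed.

End Restriction.

Definition reduced_code (R : realType) (k : nat) (A : 'I_k -> 'I_k -> R)
    (quiet : 'I_k -> Prop) (S : {set 'I_k}) : Prop :=
  exists y : 'I_k -> R,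
    (forall l, (l \in S -> 0 < y l) /\ (l \notin S -> y l = 0)) /\
    forall i, quiet i -> \sum_l A i l * y l <= y i.

Lemma reduced_code_ext (R : realType) k (A A' : 'I_k -> 'I_k -> R)
    (quiet quiet' : 'I_k -> Prop) S :
  (forall i l, A i l = A' i l) -> (forall i, quiet i <-> quiet' i) ->
  reduced_code A quiet S -> reduced_code A' quiet' S.
Proof.
move=> eqA eq_quiet [y [supp_y super_y]]; exists y; split => // i /eq_quiet /super_y.
by under eq_bigr do rewrite eqA.
Qed.

Lemma in_code_reduced (R : realType) n k (W : 'M[R]_n) (E : {set 'I_n})
    (f : 'I_k -> 'I_n) :
  injective f -> E = f @: [set: 'I_k] -> dale W E ->
  forall S : {set 'I_k}, in_code W E (f @: S) <->
    reduced_code (fun i l => W (f i) (f l)) (fun i => no_inhibitory_input W E (f i)) S.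
Proof.
move=> f_inj EfI [_ _ inhibitory_le0] S; rewrite in_code_supersolution.
have fE l : f l \in E by rewrite EfI imset_f.
split=> [[x [super supp]] | [y [supp_y super_y]]].
  exists (fun l => x (f l) 0); split=> [l | i quiet].
    have lS_pos : (l \in S) = (0 < x (f l) 0).
      by rewrite -(mem_imset _ _ f_inj) supp inE fE.
    rewrite lS_pos; split=> // /negbTE x_not_pos; apply/eqP; rewrite eq_le.
    by rewrite leNgt x_not_pos /=; case: (super (f l)).
  rewrite -(mulmx_on_image f_inj); first by case: (super (f i)).
  by move=> j; rewrite -EfI => /quiet ->; rewrite mul0r.
have y_ge0 l : 0 <= y l.
  by case: (boolP (l \in S)) => lS; [apply/ltW/(supp_y l).1 | rewrite (supp_y l).2].
pose x0 := extend_by_zero f y.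
have x0_inh j : j \notin E -> x0 j 0 = 0 by rewrite EfI; apply: extend_by_zero_outside.
have [x [super x_exc]] : exists x, supersolution W x /\
    forall a, a \in E -> x a 0 = x0 a 0.
  apply: add_inhibition => // [j | a].
    by rewrite mxE; apply: sumr_ge0 => l _; apply: mulr_ge0.
  rewrite EfI => /imsetP [i _ ->] quiet.
  rewrite (mulmx_on_image f_inj) => [|j jout]; last by rewrite x0_inh ?mulr0 // EfI.
  under eq_bigr do rewrite extend_by_zero_image //.
  by rewrite extend_by_zero_image // super_y // EfI.
exists x; split=> //; apply/setP => j; rewrite inE.
case: (boolP (j \in E)) => [| jI] /=; last first.
  by apply/negbTE; apply: contra jI => /imsetP [i _ ->].
rewrite EfI => /imsetP [i _ ->].
rewrite mem_imset // x_exc ?fE // extend_by_zero_image //.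
by case: (boolP (i \in S)) => iS; [rewrite (supp_y i).1 | rewrite (supp_y i).2 ?ltxx].
Qed.

Lemma widen_ord_image k :
  [set i : 'I_k.+1 | i != ord_max] = widen_ord (leqnSn k) @: [set: 'I_k].
Proof.
apply/setP => j; rewrite inE; apply/idP/imsetP => [j_max | [i _ ->]].
  have j_lt : (j < k)%N by rewrite ltn_neqAle -ltnS ltn_ord andbT.
  by exists (Ordinal j_lt) => //; apply: val_inj.
by rewrite -(inj_eq val_inj) /= neq_ltn ltn_ord.
Qed.

Lemma widen_ord_inj k : injective (widen_ord (leqnSn k)).
Proof. by move=> a b /(congr1 val) /= ab; apply: val_inj. Qed.

Theorem mainTheorem1 (R : realType) (n k : nat)
  (W : 'M[R]_n) (E : {set 'I_n}) (f : 'I_k -> 'I_n)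
  (W' : 'M[R]_k.+1) :
  injective f ->
  E = f @: [set: 'I_k] ->
  dale W E ->
  dale W' [set i : 'I_k.+1 | i != ord_max] ->
  (forall i j : 'I_k,
     W' (widen_ord (leqnSn k) i) (widen_ord (leqnSn k) j) = W (f i) (f j)) ->
  (forall i : 'I_k,
     W' (widen_ord (leqnSn k) i) ord_max =
       if [exists j : 'I_n, (j \notin E) && (W (f i) j != 0)] then -1 else 0) ->
  ground_assumption W ->
  ground_assumption W' ->
  forall S : {set 'I_k},
    in_code W E (f @: S) <->
    in_code W' [set i : 'I_k.+1 | i != ord_max] (widen_ord (leqnSn k) @: S).
Proof.
move=> f_inj EfI daleW daleW' same_block inhib_col _ _ S.
pose w := widen_ord (leqnSn k).
rewrite (in_code_reduced f_inj EfI daleW S).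
rewrite (in_code_reduced (@widen_ord_inj k) (widen_ord_image k) daleW' S).
have same_quiet i : no_inhibitory_input W E (f i) <->
    no_inhibitory_input W' [set i : 'I_k.+1 | i != ord_max] (w i).
  rewrite /no_inhibitory_input; split=> [quiet j | quiet' j jI].
    rewrite inE negbK => /eqP ->; rewrite inhib_col.
    by case: existsP => // [[j' /andP [j'I]]]; rewrite quiet ?eqxx.
  have := quiet' ord_max; rewrite inE eqxx inhib_col => /(_ isT).
  case: existsP => [_ /eqP | no_input _]; first by rewrite oppr_eq0 oner_eq0.
  have [// | Wj] := eqVneq (W (f i) j) 0.
  by case: no_input; exists j; rewrite jI Wj.
split; apply: reduced_code_ext => i.
- by move=> l; rewrite same_block.
- exact: same_quiet.
- by move=> l; rewrite same_block.
- exact: iff_sym (same_quiet i).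
Qed.
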